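(* If $G$ is a subcubic graph of order $n\ge 1$, then $\gamma_{e,f}^*(G)\ge \frac16\left(\sqrt{2n+\frac{49}{36}}+\frac76\right)$.
   Context: All graphs are finite, simple and undirected; subcubic means maximum degree at most $3$. The fractional porous exponential domination number $\gamma_{e,f}^*(G)$ is the optimum value of the linear program: minimize $\sum_{u\in V(G)}x(u)$ subject to $\sum_{u\in V(G)}\left(\frac12\right)^{\mathrm{dist}_G(u,v)-1}x(u)\ge 1$ for every $v\in V(G)$ and $x\ge 0$, where $\mathrm{dist}_G$ is the usual graph distance ($\infty$ between different components) and $\left(\frac12\right)^\infty=0$. *)

From HB Require Import structures.
From mathcomp Require Import all_boot all_order all_algebra.
Set Implicit Arguments. Unset Strict Implicit. Unset Printing Implicit Defensive.
Import Order.TTheory GRing.Theory Num.Theory.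

Definition simple_graph (T : finType) (e : rel T) : Prop :=
  symmetric e /\ irreflexive e.

Definition subcubic (T : finType) (e : rel T) : Prop :=
  forall x : T, #|[set y | e x y]| <= 3.

Fixpoint ball (T : finType) (e : rel T) (k : nat) (u : T) : {set T} :=
  match k with
  | 0 => [set u]
  | k'.+1 => ball e k' u :|: [set y | [exists x in ball e k' u, e x y]]
  end.

(* graph distance: least k with v in ball k u (meaningful when connect e u v,
   in which case the distance is < #|T|) *)
Definition gdist (T : finType) (e : rel T) (u v : T) : nat :=
  find (fun k => v \in ball e k u) (iota 0 #|T|).

Local Open Scope ring_scope.

(* (1/2)^(dist(u,v) - 1), with (1/2)^infinity = 0 *)
Definition pweight (R : numFieldType) (T : finType) (e : rel T) (u v : T) : R :=
  if connect e u v then 2 / 2 ^+ gdist e u v else 0.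

Definition fped_feasible (R : numFieldType) (T : finType) (e : rel T)
  (x : T -> R) : Prop :=
  (forall u, 0 <= x u) /\
  (forall v, 1 <= \sum_(u : T) pweight R e u v * x u).

Definition is_fped_number (R : numFieldType) (T : finType) (e : rel T)
  (g : R) : Prop :=
  (exists x, fped_feasible e x /\ \sum_(u : T) x u = g) /\
  (forall x, fped_feasible e x -> g <= \sum_(u : T) x u).

From HB Require Import structures.
From mathcomp Require Import all_boot all_order all_algebra.
From mathcomp Require Import ring lra zify.
Import Order.TTheory GRing.Theory Num.Theory.

(** In a subcubic graph the ball B_k(u) of radius k has at most 4^k
    vertices.  Since 2^-d <= 2^-K + sum_(k<K) [d <= k] 2^-(k+1), every
    column sum  sum_v 2^(1 - dist(u,v))  of the LP is at most
    H = 2n/2^K + sum_(k<K) |B_k(u)|/2^k <= 2n/2^K + 2^K - 1,  for any K.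
    Summing the n constraints of a feasible x gives n <= H * sum_u x(u), and
    the choice 4^K <= 2n < 4^(K+1) makes n/H at least the stated bound. *)

Section Balls.
Variables (T : finType) (e : rel T).

Lemma card_set_has_edge (s : seq T) : subcubic e ->
  #|[set y | has (e^~ y) s]| <= 3 * size s.
Proof.
move=> sc; elim: s => [|x s IH].
  by rewrite (_ : [set y | _] = set0) ?cards0 //; apply/setP=> y; rewrite !inE.
have -> : [set y | has (e^~ y) (x :: s)] =
          [set y | e x y] :|: [set y | has (e^~ y) s].
  by apply/setP=> y; rewrite !inE.
by rewrite mulnS (leq_trans (leq_card_setU _ _).1) ?leq_add ?sc.
Qed.

Lemma card_ball_succ k u : subcubic e ->
  #|ball e k.+1 u| <= 4 * #|ball e k u|.
Proof.
move=> sc /=; apply: leq_trans (leq_card_setU _ _).1 _.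
have -> : [set y | [exists x in ball e k u, e x y]] =
          [set y | has (e^~ y) (enum (ball e k u))].
  apply/setP=> y; rewrite !inE; apply/existsP/hasP.
    by case=> x /andP[xb exy]; exists x; rewrite ?mem_enum.
  by case=> x xb exy; exists x; rewrite -mem_enum xb.
by rewrite [4 * _]mulSn leq_add // [#|ball e k u|]cardE card_set_has_edge.
Qed.

Lemma card_ball k u : subcubic e -> #|ball e k u| <= 4 ^ k.
Proof.
move=> sc; elim: k => [|k IH]; first by rewrite cards1.
by rewrite (leq_trans (card_ball_succ _ _ sc)) // expnS leq_mul2l.
Qed.

Lemma ball_subset k j u : k <= j -> ball e k u \subset ball e j u.
Proof.
move/subnKC <-; elim: (j - k) => [|i IH]; first by rewrite addn0.
by rewrite addnS (subset_trans IH) ?subsetUl.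
Qed.

Lemma mem_ball_last u p x k : x \in ball e k u -> path e x p ->
  last x p \in ball e (k + size p) u.
Proof.
elim: p x k => [|y p IH] x k xb /=; first by rewrite addn0.
case/andP=> exy pp; rewrite addnS -addSn; apply: IH pp.
by rewrite !inE; apply/orP; right; apply/existsP; exists x; rewrite xb.
Qed.

Lemma connect_mem_ball u v : connect e u v ->
  exists2 k, k < #|T| & v \in ball e k u.
Proof.
case/connectP=> p pp ->; case: (shortenP pp) => q pq uq _.
exists (size q); last by rewrite -[size q]add0n mem_ball_last ?set11.
rewrite -ltnS -[(size q).+1]/(size (u :: q)) -(card_uniqP uq).
exact: max_card.
Qed.

Lemma mem_ball_gdist u v : connect e u v -> v \in ball e (gdist e u v) u.
Proof.
case/connect_mem_ball=> k kT vk.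
have hk : has (fun k => v \in ball e k u) (iota 0 #|T|).
  by apply/hasP; exists k; rewrite ?mem_iota.
have := nth_find 0 hk.
by rewrite nth_iota // -[X in (_ < X)%N](size_iota 0) -has_find.
Qed.

End Balls.

Local Open Scope ring_scope.

Lemma sum_mem_natr (R : pzSemiRingType) (T : finType) (A : {set T}) :
  \sum_(i : T) (i \in A)%:R = #|A|%:R :> R.
Proof. by rewrite -natr_sum -sum1_card [in RHS]big_mkcond. Qed.

Section ColumnSum.
Variables (R : realFieldType) (T : finType) (e : rel T) (u : T).

Lemma invr_exp2_le i j : (i <= j)%N -> (2 ^+ j)^-1 <= (2 ^+ i)^-1 :> R.
Proof. by move=> ij; rewrite lef_pV2 ?posrE ?exprn_gt0 // ler_eXn2l ?ltr1n. Qed.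

Lemma pweight_le_ball_sum v N : pweight R e u v <=
  2 * ((2 ^+ N)^-1 + \sum_(k < N) (v \in ball e k u)%:R / 2 ^+ k.+1).
Proof.
rewrite /pweight; case: ifP => [uv|_]; last first.
  by rewrite mulr_ge0 ?addr_ge0 ?invr_ge0 ?exprn_ge0 ?sumr_ge0 // => k _;
     rewrite divr_ge0 ?exprn_ge0.
rewrite ler_pM2l //; set d := gdist e u v.
have vd : v \in ball e d u by apply: mem_ball_gdist.
elim: N => [|N IH]; first by rewrite big_ord0 addr0 invr_exp2_le.
rewrite big_ord_recr /=; set s := \sum_(i < N) _ in IH *.
have s0 : 0 <= s by rewrite sumr_ge0 // => k _; rewrite divr_ge0 ?exprn_ge0.
case vN: (v \in ball e N u); last first.
  have dN : (N.+1 <= d)%N.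
    by rewrite ltnNge; apply: contraFN vN => /ball_subset/subsetP; apply.
  by have := @invr_exp2_le _ _ dN; rewrite mul0r; lra.
by move: IH; rewrite mul1r exprS invfM; lra.
Qed.

Lemma sum_pweight_le N : subcubic e ->
  \sum_v pweight R e u v <= 2 * #|T|%:R / 2 ^+ N + (2 ^+ N - 1).
Proof.
move=> sc; apply: le_trans (ler_sum _ (fun v _ => pweight_le_ball_sum v N)) _.
rewrite -mulr_sumr big_split /= sumr_const exchange_big mulrDr.
apply: lerD; first by rewrite -[_ *+ #|_|]mulr_natr mulrA mulrAC.
rewrite (_ : 2 ^+ N - 1 = \sum_(k < N) 2 ^+ k); last first.
  by rewrite subrX1 addrK mul1r.
rewrite mulr_sumr; apply: ler_sum => k _.
rewrite -mulr_suml sum_mem_natr exprS invfM mulrCA mulVKf ?pnatr_eq0 //.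
rewrite ler_pdivrMr ?exprn_gt0 // -exprMn -natrM -natrX ler_nat.
exact: card_ball.
Qed.

End ColumnSum.

Lemma quadratic_bound (R : realFieldType) (t m : R) :
  2 <= m -> m <= t -> t <= 4 * m ->
  (t + m + 5 / 2) ^+ 2 <= 9 * t * m + 49 / 4.
Proof.
(* The left side minus the right is convex in t; on [m, 4m] it lies below its
   chord, whose values -(5m^2 - 10m + 6) and -(11m - 3)(m - 2) are <= 0. *)
move=> m2 mt t4; rewrite -subr_le0 -(pmulr_rle0 _ (_ : 0 < 3 * m)); last by lra.
have -> : 3 * m * ((t + m + 5 / 2) ^+ 2 - (9 * t * m + 49 / 4)) =
  - (3 * m * ((t - m) * (4 * m - t)) + (4 * m - t) * (5 * m * (m - 2) + 6)
     + (t - m) * ((11 * m - 3) * (m - 2))) by field.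
by rewrite oppr_le0 !addr_ge0 ?mulr_ge0 //; nra.
Qed.

Lemma exists_exponent (R : realFieldType) (n : nat) : (1 <= n)%N ->
  exists K,
    (2 * n%:R / 2 ^+ K + (2 ^+ K - 1) + 7 / 2) ^+ 2 <= 18 * n%:R + 49 / 4 :> R.
Proof.
move=> n1; case: (ltngtP n 1) => [|n2|->]; first by case: n n1.
  pose K := trunc_log 4 (2 * n); exists K.
  have lo : (4 ^ K <= 2 * n)%N by rewrite trunc_logP // muln_gt0.
  have hi : (2 * n < 4 * 4 ^ K)%N by rewrite -expnS trunc_log_ltn.
  have K1 : (0 < K)%N by rewrite trunc_log_gt0 /=; lia.
  set m : R := 2 ^+ K.
  have m2 : 2 <= m by rewrite -[X in X <= _]expr1 ler_eXn2l ?ltr1n.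
  have em : m ^+ 2 = (4 ^ K)%:R.
    by rewrite -exprM mulnC exprM natrX expr2 -natrM.
  have m0 : 0 < m by lra.
  set t := 2 * n%:R / m.
  have tm : t * m = 2 * n%:R by rewrite mulfVK ?gt_eqF.
  have n2R : 2 * n%:R = (2 * n)%:R :> R by rewrite natrM.
  have mt : m <= t by rewrite ler_pdivlMr // -expr2 em n2R ler_nat.
  have t4 : t <= 4 * m.
    by rewrite ler_pdivrMr // -mulrA -expr2 em n2R -natrM ler_nat ltnW.
  have := @quadratic_bound R t m m2 mt t4; lra.
exists 0%N; rewrite expr0 divr1 subrr addr0; lra.
Qed.

Lemma card_le_fped_sum (R : realFieldType) (T : finType) (e : rel T)
    (H : R) (x : T -> R) :
  (forall u, \sum_v pweight R e u v <= H) -> fped_feasible e x ->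
  #|T|%:R <= H * \sum_u x u.
Proof.
move=> colH [x_ge0 x_dom].
have -> : #|T|%:R = \sum_(v : T) (1 : R) by rewrite sumr_const.
apply: le_trans (ler_sum _ (fun v _ => x_dom v)) _.
rewrite exchange_big mulr_sumr; apply: ler_sum => u _.
by rewrite -mulr_suml mulrC [H * _]mulrC ler_wpM2l ?colH ?x_ge0.
Qed.

Lemma sqrt_bound_le (R : rcfType) (n g H : R) : 0 <= n -> 0 < H ->
  n <= H * g -> (H + 7 / 2) ^+ 2 <= 18 * n + 49 / 4 ->
  (Num.sqrt (2 * n + 49 / 36) + 7 / 6) / 6 <= g.
Proof.
move=> n0 H0 nHg hH; set s := Num.sqrt _.
have s0 : 0 <= s by apply: sqrtr_ge0.
have s2 : s ^+ 2 = 2 * n + 49 / 36 by rewrite sqr_sqrtr //; lra.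
have h3 : H + 7 / 2 <= 3 * s by nra.
(* (3s - 7/2)(s + 7/6) = 3s^2 - 49/12 = 6n *)
have : H * ((s + 7 / 6) / 6) <= n by nra.
nra.
Qed.

Theorem corollary2 (R : rcfType) (T : finType) (e : rel T) (g : R) :
  simple_graph e -> subcubic e -> (1 <= #|T|)%N ->
  is_fped_number e g ->
  (Num.sqrt (2 * (#|T|)%:R + 49 / 36) + 7 / 6) / 6 <= g.
Proof.
move=> _ sc nT [[x [x_feas <-]] _].
have [K hK] := exists_exponent R #|T| nT.
set H : R := 2 * #|T|%:R / 2 ^+ K + (2 ^+ K - 1) in hK.
have H0 : 0 < H.
  have : 1 <= 2 ^+ K :> R by rewrite exprn_ege1 ?ler1n.
  have : 0 < 2 * #|T|%:R / 2 ^+ K :> R.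
    by rewrite divr_gt0 ?mulr_gt0 ?ltr0n ?exprn_gt0.
  by rewrite /H; lra.
apply: sqrt_bound_le hK => //.
by apply: card_le_fped_sum x_feas => u; apply: sum_pweight_le.
Qed.
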